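(* Let $T$ be a synthesis task, $D$ a probability distribution over examples of $T$, $n_0\ge 1$ an integer, and $\mathcal S$ a solver for $T$ that, given a finite collection of examples, returns a program satisfying all of them. Consider the iterative algorithm: set $t\leftarrow 1$, $n_s\leftarrow n_0$; repeatedly draw $n_s$ examples independently from $D$, run $\mathcal S$ on them obtaining program $q$; if $\mathrm{size}(q)\le t$ return $q$, otherwise set $t\leftarrow 2t$, $n_s\leftarrow 2n_s$ and repeat. Then: (1) For every $\epsilon\in(2\ln 2/n_0,\,1)$, the probability that the algorithm terminates returning a program $q$ with $\mathrm{err}_D(q)\ge\epsilon$ is at most $4\exp(-\epsilon n_0)$. (2) If $T$ has at least one correct program and $\mathcal S$ is an $(\alpha,\beta)$-Occam solver for some constants $\alpha\ge1$, $0\le\beta<1$, then the algorithm always terminates.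
   Context: $\mathrm{size}(q)$ is the length of the binary representation of program $q$; in particular, for every $j\ge1$ there are at most $2^j$ programs of size at most $j$. $\mathrm{err}_D(q)$ is the probability that $q$ violates (does not satisfy) an example drawn from $D$. A correct program of $T$ is one satisfying every example of $T$. A solver $\mathcal S$ is an $(\alpha,\beta)$-Occam solver (for constants $\alpha\ge1$, $0\le\beta<1$) if there is a constant $c$ such that for every finite set $E$ of examples and every correct program $p^*$ of $T$, the program returned by $\mathcal S$ on $E$ has size at most $c\,(\mathrm{size}(p^* ))^{\alpha}|E|^{\beta}$. *)

From HB Require Import structures.
From mathcomp Require Import all_boot all_order all_algebra.
From mathcomp Require Import all_classical all_reals all_analysis.
Set Implicit Arguments. Unset Strict Implicit. Unset Printing Implicit Defensive.
Import Order.TTheory GRing.Theory Num.Theory.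
Local Open Scope classical_set_scope.
Local Open Scope ring_scope.

(* A synthesis task T is given by a type of programs [Prog], a type of
   examples [E] and a satisfaction relation [sat q e] ("q satisfies e"). *)

Definition correct (Prog E : Type) (sat : Prog -> E -> bool) (p : Prog) : Prop :=
  forall e : E, sat p e.

Definition size_count (Prog : eqType) (psize : Prog -> nat) : Prop :=
  forall j : nat, (1 <= j)%N -> forall l : seq Prog, uniq l ->
    all (fun q => (psize q <= j)%N) l -> (size l <= 2 ^ j)%N.

Definition solver_consistent (Prog E : Type) (sat : Prog -> E -> bool)
  (S : seq E -> Prog) : Prop :=
  forall s : seq E, all (sat (S s)) s.

Definition occam (R : realType) (Prog E : Type) (sat : Prog -> E -> bool)
  (psize : Prog -> nat) (S : seq E -> Prog) (alpha beta : R) : Prop :=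
  exists c : R, forall (s : seq E) (p : Prog), correct sat p ->
    (psize (S s))%:R <= c * ((psize p)%:R `^ alpha) * ((size s)%:R `^ beta).

Definition err (R : realType) (d : measure_display) (E : measurableType d)
  (Prog : Type) (D : probability E R) (sat : Prog -> E -> bool) (q : Prog)
  : \bar R :=
  D [set e | ~~ sat q e].

Definition iid (R : realType) (dO dE : measure_display) (Omega : measurableType dO)
  (E : measurableType dE) (P : probability Omega R) (D : probability E R)
  (X : nat -> Omega -> E) : Prop :=
  (forall i, measurable_fun setT (X i)) /\
  forall (l : seq nat), uniq l -> forall A : nat -> set E,
    (forall i, measurable (A i)) ->
    P [set w | forall i, i \in l -> A i (X i w)] =
      (\prod_(i <- l) fine (D (A i)))%:E.

(* The algorithm.  Round k (k = 0,1,2,...) uses t = 2^k and n_s = n0 * 2^k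
   fresh examples, namely X_i for i in [n0*(2^k-1), n0*(2^(k+1)-1)). *)
Definition round_sample (Omega E : Type) (X : nat -> Omega -> E) (n0 k : nat)
  (w : Omega) : seq E :=
  [seq X i w | i <- iota (n0 * (2 ^ k - 1)) (n0 * 2 ^ k)].

Definition round_prog (Omega E Prog : Type) (S : seq E -> Prog)
  (X : nat -> Omega -> E) (n0 k : nat) (w : Omega) : Prog :=
  S (round_sample X n0 k w).

Definition stops_at (Omega E Prog : Type) (psize : Prog -> nat)
  (S : seq E -> Prog) (X : nat -> Omega -> E) (n0 k : nat) (w : Omega) : Prop :=
  (psize (round_prog S X n0 k w) <= 2 ^ k)%N /\
  (forall j, (j < k)%N -> (2 ^ j < psize (round_prog S X n0 j w))%N).

From HB Require Import structures.
From mathcomp Require Import all_boot all_order all_algebra.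
From mathcomp Require Import all_classical all_reals all_analysis.
From mathcomp Require Import ring lra.
Set Implicit Arguments. Unset Strict Implicit. Unset Printing Implicit Defensive.
Import Order.TTheory GRing.Theory Num.Theory.
Local Open Scope classical_set_scope.
Local Open Scope ring_scope.

(** (1) If the algorithm stops in round k, it returns a program of size at
    most 2^k that fits all n0 2^k fresh examples.  There are at most 2^(2^k)
    such programs, and a fixed program with error at least eps fits them
    with probability at most exp(-eps n0 2^k); so round k returns a bad
    program with probability at most (2 exp(-eps n0))^(2^k), and these
    bounds sum to at most 4 exp(-eps n0) once 2 exp(-eps n0) <= 1/2.
    (2) An Occam solver returns programs of size O((n0 2^k)^beta) in round
    k, which is eventually below 2^k because beta < 1. *)

Lemma size_le_enum (Prog : eqType) (psize : Prog -> nat) (m : nat) :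
  size_count psize -> (1 <= m)%N ->
  exists L : seq Prog,
    [/\ uniq L, (size L <= 2 ^ m)%N & forall q, (q \in L) = (psize q <= m)%N].
Proof.
move=> sc m_gt0.
pose enum_of n := `[< exists L : seq Prog,
  [/\ uniq L, all (fun q => psize q <= m)%N L & size L = n] >].
have enum0 : exists n, enum_of n by exists 0%N; apply/asboolP; exists [::].
have enum_ub n : enum_of n -> (n <= 2 ^ m)%N.
  by move=> /asboolP[L [uL aL <-]]; exact: sc.
case: (ex_maxnP enum0 enum_ub) => n /asboolP[L [uL aL sizeL]] n_max.
exists L; split => //; first exact: sc.
move=> q; apply/idP/idP => [/(allP aL) //|q_small].
apply/negPn/negP => qL.
have : enum_of n.+1.
  by apply/asboolP; exists (q :: L); rewrite /= qL q_small sizeL.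
by move/n_max; rewrite ltnn.
Qed.

Section FiniteFibres.
Context (d : measure_display) (Omega : measurableType d) (Prog : eqType).
Variable f : Omega -> Prog.
Hypothesis measurable_fibre : forall q, measurable (f @^-1` [set q]).

Lemma measurable_preimage_seq (L : seq Prog) (A : set Prog) :
  A `<=` [set q | q \in L] -> measurable (f @^-1` A).
Proof.
elim: L A => [|q L IH] A AL.
  rewrite (_ : A = set0) ?preimage_set0 //.
  by apply/seteqP; split => // x /AL.
rewrite -(setUIDK A [set q]) preimage_setU setI1; apply: measurableU.
  by case: ifP => _; rewrite ?preimage_set0.
apply: IH => x [/AL]; rewrite /= in_cons => /orP[/eqP -> /(_ erefl) //|//].
Qed.

Lemma measurable_preimage_size_le (psize : Prog -> nat) (m : nat) (A : set Prog) :
  size_count psize -> (1 <= m)%N -> A `<=` [set q | (psize q <= m)%N] ->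
  measurable (f @^-1` A).
Proof.
move=> sc m_gt0 A_small; have [L [_ _ memL]] := size_le_enum sc m_gt0.
by apply: (measurable_preimage_seq (L := L)) => q /A_small /=; rewrite -memL.
Qed.

End FiniteFibres.

Lemma measurable_stops_at (d : measure_display) (Omega : measurableType d)
    (E : Type) (Prog : eqType) (psize : Prog -> nat) (S : seq E -> Prog)
    (X : nat -> Omega -> E) (n0 k : nat) (Q : set Prog) :
  size_count psize ->
  (forall j q, measurable (round_prog S X n0 j @^-1` [set q])) ->
  measurable [set w | stops_at psize S X n0 k w /\ Q (round_prog S X n0 k w)].
Proof.
move=> sc measurable_round.
rewrite (_ : [set w | _] =
    round_prog S X n0 k @^-1` [set q | (psize q <= 2 ^ k)%N /\ Q q] `&`
    \bigcap_(j in [set j | (j < k)%N])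
       ~` (round_prog S X n0 j @^-1` [set q | (psize q <= 2 ^ j)%N])).
  apply: measurableI.
    by apply: (measurable_preimage_size_le _ sc (expn_gt0 2 k)) => // q [].
  apply: bigcap_measurableType => j _; apply: measurableC.
  exact: (measurable_preimage_size_le _ sc (expn_gt0 2 j)).
apply/seteqP; split => w /=.
  move=> [[small_k large_j] Qk]; split => // j /large_j.
  by rewrite ltnNge => /negP.
move=> [[small_k Qk] large_j]; split => //; split => // j j_lt.
by rewrite ltnNge; apply/negP; exact: large_j.
Qed.

Lemma measurable_sample_in (dO dE : measure_display) (Omega : measurableType dO)
    (E : measurableType dE) (X : nat -> Omega -> E) (B : set E) (l : seq nat) :
  (forall i, measurable_fun setT (X i)) -> measurable B ->
  measurable [set w | forall i, i \in l -> B (X i w)].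
Proof.
move=> mX mB.
rewrite (_ : [set w | _] = \bigcap_(i in [set i | i \in l]) X i @^-1` B).
  by apply: bigcap_measurableType => i _; rewrite -(setTI (_ @^-1` _)); exact: mX.
by apply/seteqP; split => w /= H i /H.
Qed.

Lemma onemX_le_expR (R : realType) (e eps : R) (n : nat) :
  eps <= e <= 1 -> (1 - e) ^+ n <= expR (- (eps * n%:R)).
Proof.
move=> /andP[eps_le e_le1]; rewrite -mulNr expRM_natr.
apply: lerXn2r; rewrite ?nnegrE ?expR_ge0 ?subr_ge0 //.
by apply: le_trans (expR_ge1Dx _); lra.
Qed.

Lemma prob_sample_in_le (R : realType) (dO dE : measure_display)
    (Omega : measurableType dO) (E : measurableType dE)
    (P : probability Omega R) (D : probability E R) (X : nat -> Omega -> E)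
    (B : set E) (l : seq nat) (eps : R) :
  iid P D X -> uniq l -> measurable B -> (eps%:E <= D (~` B))%E ->
  (P [set w | forall i, i \in l -> B (X i w)]
     <= (expR (- (eps * (size l)%:R)))%:E)%E.
Proof.
move=> [_ iidX] uniq_l mB eps_le.
rewrite (iidX l uniq_l (fun=> B) (fun=> mB)) big_const_seq count_predT.
have := probability_setC D (measurableC mB); rewrite setCK => ->.
move: eps_le (measure_ge0 D (~` B)) (probability_le1 D (measurableC mB)).
case: (D (~` B)) => [e | | ] //= eps_le _ e_le1.
rewrite lee_fin iter_mulr_1.
by apply: onemX_le_expR; rewrite -!lee_fin eps_le e_le1.
Qed.

Lemma bigsetU_seq_sup (T : Type) (I : eqType) (s : seq I) (P : pred I)
    (F : I -> set T) (i : I) :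
  i \in s -> P i -> F i `<=` \big[setU/set0]_(j <- s | P j) F j.
Proof.
elim: s => [|j s IH] //; rewrite in_cons big_cons => /orP[/eqP <- -> | /IH sub Pi].
  exact: subsetUl.
by case: (P j); [apply: subset_trans (sub Pi) _; exact: subsetUr | exact: sub].
Qed.

Lemma measure_bigsetU_seq_le (d : measure_display) (T : measurableType d)
    (R : realType) (mu : {measure set T -> \bar R}) (I : Type) (s : seq I)
    (P : pred I) (F : I -> set T) :
  (forall i, P i -> measurable (F i)) ->
  (mu (\big[setU/set0]_(i <- s | P i) F i) <= \sum_(i <- s | P i) mu (F i))%E.
Proof.
move=> mF; elim: s => [|i s IH]; first by rewrite !big_nil measure0.
rewrite !big_cons; case: ifP => // Pi.
apply: le_trans (measureU2 _ _ _) _; [exact: mF | exact: bigsetU_measurable |].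
exact: leeD2l.
Qed.

(* The terms are dominated by r^(k+1); the right-hand side is an
   induction-friendly bound on that geometric sum for r <= 1/2. *)
Lemma sum_expn_pow2_le (R : realType) (r : R) (N : nat) : 0 <= r -> 2 * r <= 1 ->
  \sum_(0 <= k < N) r ^+ (2 ^ k) <= 2 * r - 2 * r ^+ N.+1.
Proof.
move=> r_ge0 r_le; elim: N => [|N IH]; first by rewrite big_nil expr1 subrr.
rewrite big_nat_recr //=.
have dom : r ^+ (2 ^ N) <= r ^+ N.+1.
  by apply: ler_wiXn2l => //; [lra | exact: ltn_expl].
have geom : 2 * r ^+ N.+2 <= r ^+ N.+1.
  by rewrite exprS mulrA; apply: ler_piMl; [exact: exprn_ge0 | by []].
lra.
Qed.

Lemma nneseries_expn_pow2_le (R : realType) (r : R) : 0 <= r -> 2 * r <= 1 ->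
  (\sum_(0 <= k <oo) (r ^+ (2 ^ k))%:E <= (2 * r)%:E)%E.
Proof.
move=> r_ge0 r_le; apply: lime_le.
  by apply: is_cvg_nneseries => n _ _; rewrite lee_fin exprn_ge0.
apply: nearW => N; rewrite sumEFin lee_fin.
apply: le_trans (sum_expn_pow2_le N r_ge0 r_le) _.
by rewrite gerBl mulr_ge0 // exprn_ge0.
Qed.

Lemma four_expRN_le1 (R : realType) (x : R) : 2 * ln 2 <= x -> 4 * expR (- x) <= 1.
Proof.
move=> x_ge.
have exp_2ln2 : expR (ln 2 * 2%:R) = 4 :> R.
  by rewrite expRM_natr lnK ?posrE // expr2; lra.
have : expR (- x) <= expR (- (ln 2 * 2%:R)) by rewrite ler_expR lerN2 mulrC.
rewrite [leRHS]expRN exp_2ln2; lra.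
Qed.

Section ErrorBound.
Variables (R : realType) (Prog : eqType) (dE : measure_display)
  (E : measurableType dE) (sat : Prog -> E -> bool) (psize : Prog -> nat)
  (S : seq E -> Prog) (n0 : nat) (dO : measure_display)
  (Omega : measurableType dO) (P : probability Omega R) (D : probability E R)
  (X : nat -> Omega -> E) (eps : R).
Hypotheses (sc : size_count psize) (S_consistent : solver_consistent sat S)
  (measurable_sat : forall q, measurable [set e | sat q e]) (iidX : iid P D X)
  (measurable_S : forall l q, measurable [set w | S [seq X i w | i <- l] = q]).

Let measurable_bad_stop k :
  measurable [set w | stops_at psize S X n0 k w /\
                      (eps%:E <= err D sat (round_prog S X n0 k w))%E].
Proof.
exact: (measurable_stops_at k [set q | eps%:E <= err D sat q]%E sc
  (fun j q => measurable_S _ q)).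
Qed.

Lemma prob_stops_with_error_at_le k :
  (P [set w | stops_at psize S X n0 k w /\
              (eps%:E <= err D sat (round_prog S X n0 k w))%E]
    <= ((2 * expR (- (eps * n0%:R))) ^+ (2 ^ k))%:E)%E.
Proof.
have [L [_ sizeL memL]] := size_le_enum sc (expn_gt0 2 k).
pose bad q := (eps%:E <= err D sat q)%E.
pose sample := iota (n0 * (2 ^ k - 1)) (n0 * 2 ^ k).
pose fits q := [set w | forall i, i \in sample -> [set e | sat q e] (X i w)].
have measurable_fits q : measurable (fits q).
  exact: measurable_sample_in _ iidX.1 (measurable_sat q).
have fits_of_stop :
    [set w | stops_at psize S X n0 k w /\ bad (round_prog S X n0 k w)]
    `<=` \big[setU/set0]_(q <- L | bad q) fits q.
  move=> w [[small_k _] bad_k].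
  apply: (bigsetU_seq_sup (i := round_prog S X n0 k w)); rewrite ?memL //.
  by move=> i i_in; apply: (allP (S_consistent _)); exact: map_f.
apply: le_trans (le_measure P _ _ fits_of_stop) _; rewrite ?inE.
- exact: measurable_bad_stop.
- exact: bigsetU_measurable.
apply: le_trans (measure_bigsetU_seq_le P L (fun q _ => measurable_fits q)) _.
have fits_le q : bad q -> (P (fits q) <= (expR (- (eps * n0%:R)) ^+ (2 ^ k))%:E)%E.
  move=> bad_q.
  have -> : expR (- (eps * n0%:R)) ^+ (2 ^ k) = expR (- (eps * (size sample)%:R)).
    by rewrite -expRM_natr size_iota natrM mulrA mulNr.
  apply: prob_sample_in_le iidX (iota_uniq _ _) (measurable_sat q) _.
  suff -> : ~` [set e | sat q e] = [set e | ~~ sat q e] by exact: bad_q.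
  by apply/seteqP; split => e /=; case: (sat q e).
apply: le_trans (lee_sum L fits_le) _.
rewrite sumEFin lee_fin big_const_seq iter_addr_0 exprMn -natrX mulr_natl.
apply: ler_wpMn2l; first by rewrite exprn_ge0 ?expR_ge0.
exact: leq_trans (count_size _ _) sizeL.
Qed.

Lemma prob_stops_with_error_le : (1 <= n0)%N -> 2 * ln 2 / n0%:R < eps ->
  (P [set w | exists k : nat, stops_at psize S X n0 k w /\
                 (eps%:E <= err D sat (round_prog S X n0 k w))%E]
    <= (4 * expR (- (eps * n0%:R)))%:E)%E.
Proof.
move=> n0_gt0 eps_gt.
pose bad_stop k := [set w | stops_at psize S X n0 k w /\
                            (eps%:E <= err D sat (round_prog S X n0 k w))%E].
have -> : [set w | exists k, bad_stop k w] = \bigcup_k bad_stop k.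
  by apply/seteqP; split => w [k]; exists k.
apply: le_trans (measure_sigma_subadditive _ measurable_bad_stop
  (bigcup_measurable (fun k _ => measurable_bad_stop k)) (@subset_refl _ _)) _.
apply: le_trans (lee_nneseries (fun k _ _ => measure_ge0 P _)
  (fun k _ => prob_stops_with_error_at_le k)) _.
have r_le : 4 * expR (- (eps * n0%:R)) <= 1.
  by apply/four_expRN_le1/ltW; rewrite -ltr_pdivrMr ?ltr0n.
rewrite (_ : 4 * _ = 2 * (2 * expR (- (eps * n0%:R)))); last by ring.
by apply: nneseries_expn_pow2_le; [rewrite mulr_ge0 ?expR_ge0 | lra].
Qed.

End ErrorBound.

Lemma powR_sublinear (R : realType) (K beta : R) : beta < 1 ->
  exists M : R, forall x, M <= x -> K * x `^ beta <= x.
Proof.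
move=> beta_lt1; have gap_gt0 : 0 < 1 - beta by rewrite subr_gt0.
exists (Num.max 1 (K `^ (1 - beta)^-1)) => x; rewrite ge_max => /andP[x_ge1 x_ge].
have x_gt0 : 0 < x by exact: lt_le_trans x_ge1.
have split_x : x = x `^ beta * x `^ (1 - beta).
  rewrite -powRD; last by rewrite (gt_eqF x_gt0) implybT.
  by rewrite addrCA subrr addr0 powRr1 ?ltW.
case: (leP K 0) => [K_le0 | K_gt0].
  by apply: le_trans (ltW x_gt0); rewrite mulr_le0_ge0 ?powR_ge0.
rewrite [leRHS]split_x mulrC ler_pM2l ?powR_gt0 //.
have -> : K = (K `^ (1 - beta)^-1) `^ (1 - beta).
  by rewrite -powRrM mulVf ?gt_eqF // powRr1 ?ltW.
by apply: ge0_ler_powR; rewrite ?nnegrE ?powR_ge0 ?(ltW gap_gt0) ?(ltW x_gt0).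
Qed.

Lemma occam_terminates (R : realType) (Prog E Omega : Type)
    (sat : Prog -> E -> bool) (psize : Prog -> nat) (S : seq E -> Prog)
    (n0 : nat) (alpha beta : R) (X : nat -> Omega -> E) (w : Omega) :
  (1 <= n0)%N -> (exists p, correct sat p) -> beta < 1 ->
  occam sat psize S alpha beta -> exists k, stops_at psize S X n0 k w.
Proof.
move=> n0_gt0 [p p_correct] beta_lt1 [c occ].
have [M sublin] := powR_sublinear (c * (psize p)%:R `^ alpha * n0%:R) beta_lt1.
have small_round : exists k, (psize (round_prog S X n0 k w) <= 2 ^ k)%N.
  exists (Num.truncn M); rewrite -(ler_nat R).
  apply: le_trans (occ _ _ p_correct) _; rewrite size_map size_iota.
  rewrite -(@ler_pM2r _ n0%:R) ?ltr0n // mulrAC -natrM mulnC.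
  apply: sublin; apply: le_trans (ltW (truncnS_gt M)) _; rewrite ler_nat.
  exact: leq_trans (ltn_expl _ (ltnSn 1)) (leq_pmulr _ n0_gt0).
have [k small_k first_k] := ex_minnP small_round.
exists k; split => // j j_lt; rewrite ltnNge; apply/negP => /first_k.
by rewrite leqNgt j_lt.
Qed.

Theorem theorem5 (R : realType) (Prog : eqType) (dE : measure_display)
  (E : measurableType dE) (sat : Prog -> E -> bool) (psize : Prog -> nat)
  (S : seq E -> Prog) (n0 : nat) :
  size_count psize -> solver_consistent sat S -> (1 <= n0)%N ->
  (* (1) *)
  (forall (dO : measure_display) (Omega : measurableType dO)
          (P : probability Omega R) (D : probability E R) (X : nat -> Omega -> E),
     (forall q, measurable [set e | sat q e]) ->
     iid P D X ->
     (forall (l : seq nat) (q : Prog), measurable [set w | S [seq X i w | i <- l] = q]) ->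
     forall eps : R, 2 * ln 2 / n0%:R < eps < 1 ->
       (P [set w | exists k : nat, stops_at psize S X n0 k w /\
                  (eps%:E <= err D sat (round_prog S X n0 k w))%E]
       <= (4 * expR (- (eps * n0%:R)))%:E)%E)
  /\
  (* (2) *)
  ((exists p, correct sat p) ->
   forall alpha beta : R, 1 <= alpha -> 0 <= beta < 1 ->
   occam sat psize S alpha beta ->
   forall (Omega : Type) (X : nat -> Omega -> E) (w : Omega),
     exists k : nat, stops_at psize S X n0 k w).
Proof.
move=> sc S_consistent n0_gt0; split.
  move=> dO Omega P D X measurable_sat iidX measurable_S eps /andP[eps_gt _].
  exact: prob_stops_with_error_le.
move=> has_correct alpha beta _ /andP[_ beta_lt1] occ Omega X w.
exact: occam_terminates n0_gt0 has_correct beta_lt1 occ.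
Qed.
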